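(* (a) Let $\langle A,\le\rangle$ be a poset with a partition pair $\langle\otimes,\odot\rangle$. Let $I\subseteq A$ be a set of representatives of the classes of $\equiv_\odot$ (equivalently $\equiv_\otimes$), made into a join-semilattice by letting $p\vee q$ be the representative of the class of $p\odot q$, let $A_p$ be the class of $p$ with the restricted order $\le_p$, and for $p\preceq_\odot q$ in $I$ define $\psi_{pq}(a):=a\otimes q$, $\varphi_{pq}(a):=a\odot q$ ($a\in A_p$). Then these maps are well-defined monotone maps $A_p\to A_q$ forming a directed system (identities at $p=q$, closed under composition) which satisfies conditions (S1) and (S2) below, and for $a\in A_p$, $b\in A_q$, $s=p\vee q$: $a\le b$ iff $\varphi_{ps}(a)\le_s\psi_{qs}(b)$. (b) Conversely, let $\mathbf I$ be a join-semilattice, $\langle A_p,\le_p\rangle$ ($p\in I$) pairwise disjoint posets and $\psi_{pq},\varphi_{pq}:A_p\to A_q$ ($p\preceq q$) monotone maps with $\varphi_{pp}=\psi_{pp}=\mathrm{id}$, $\varphi_{qr}\varphi_{pq}=\varphi_{pr}$, $\psi_{qr}\psi_{pq}=\psi_{pr}$, satisfying (S1) and (S2); let $\le$ on $A=\biguplus A_p$ be defined by $a\le b$ iff $\varphi_{ps}(a)\le_s\psi_{qs}(b)$ ($a\in A_p$, $b\in A_q$, $s=p\vee q$). Then $a\otimes b:=\psi_{ps}(a)$ and $a\odot b:=\varphi_{ps}(a)$ define a partition pair on $\langle A,\le\rangle$ whose induced maps as in (a) are the given $\psi_{pq},\varphi_{pq}$. Here (S1): if $p\prec q$, $p\prec r$,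 $t=q\vee r$, then $\varphi_{qt}(\psi_{pq}(a))\le_t\psi_{rt}(\varphi_{pr}(a))$ for all $a\in A_p$; (S2): if $p\prec q$, $a,b\in A_p$ and $\varphi_{pq}(a)\le_q\psi_{pq}(b)$, then $a<_pb$.
   Context: A left normal band on a set $A$ is a binary operation $\odot$ with $a\odot a=a$, $a\odot(b\odot c)=(a\odot b)\odot c$, $a\odot(b\odot c)=a\odot(c\odot b)$ for all $a,b,c$. Put $a\preceq_\odot b\iff b\odot a=b$, and $a\equiv_\odot b$ iff $a\preceq_\odot b$ and $b\preceq_\odot a$; the quotient by $\equiv_\odot$ is a join-semilattice under the induced operation. Two left normal bands are homotactic if they induce the same preorder $\preceq$. A partition pair for a poset $\langle A,\le\rangle$ is a pair $\langle\otimes,\odot\rangle$ of homotactic left normal bands on $A$ such that (PS1) if $a\le b$ then $a\otimes c\le b\otimes c$ and $a\odot c\le b\odot c$ for all $c$; (PS2) if $a\odot b\le b\otimes a$ then $a\le b$. *)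

From HB Require Import structures.
From mathcomp Require Import all_boot all_order.
Set Implicit Arguments. Unset Strict Implicit. Unset Printing Implicit Defensive.
Import Order.Theory.
Local Open Scope order_scope.

Definition is_poset (T : Type) (le : T -> T -> Prop) : Prop :=
  (forall a, le a a) /\
  (forall a b, le a b -> le b a -> a = b) /\
  (forall a b c, le a b -> le b c -> le a c).

Definition left_normal_band (T : Type) (op : T -> T -> T) : Prop :=
  (forall a, op a a = a) /\
  (forall a b c, op a (op b c) = op (op a b) c) /\
  (forall a b c, op a (op b c) = op a (op c b)).

Definition band_le (T : Type) (op : T -> T -> T) (a b : T) : Prop := op b a = b.

Definition band_eq (T : Type) (op : T -> T -> T) (a b : T) : Prop :=
  band_le op a b /\ band_le op b a.

Definition homotactic (T : Type) (o1 o2 : T -> T -> T) : Prop :=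
  forall a b, band_le o1 a b <-> band_le o2 a b.

Definition partition_pair (T : Type) (le : T -> T -> Prop)
    (otimes odot : T -> T -> T) : Prop :=
  left_normal_band otimes /\ left_normal_band odot /\ homotactic otimes odot /\
  (forall a b c, le a b -> le (otimes a c) (otimes b c) /\ le (odot a c) (odot b c)) /\
  (forall a b, le (odot a b) (otimes b a) -> le a b).

Definition is_rep_set (T : Type) (odot : T -> T -> T) (I : T -> Prop) : Prop :=
  forall a, exists i, I i /\ band_eq odot i a /\
    (forall j, I j -> band_eq odot j a -> j = i).

(* Part (b): the disjoint union A = ⊎_p A_p is the sigma type {p : I & A p}.
   The families of maps psi, phi are given as total functions
   A p -> A q for all p q; only their values for p <= q matter. *)
Section Glue.
Context {d : Order.disp_t} {I : joinSemilatticeType d} {A : I -> Type}.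
Variables (leA : forall p, A p -> A p -> Prop)
          (psi phi : forall p q : I, A p -> A q).

Definition glue_le (x y : {p : I & A p}) : Prop :=
  leA (phi (projT1 x `|` projT1 y) (projT2 x))
      (psi (projT1 x `|` projT1 y) (projT2 y)).

Definition glue_otimes (x y : {p : I & A p}) : {p : I & A p} :=
  existT A (projT1 x `|` projT1 y) (psi (projT1 x `|` projT1 y) (projT2 x)).

Definition glue_odot (x y : {p : I & A p}) : {p : I & A p} :=
  existT A (projT1 x `|` projT1 y) (phi (projT1 x `|` projT1 y) (projT2 x)).
End Glue.

From HB Require Import structures.
From mathcomp Require Import all_boot all_order.
Import Order.Theory.
Local Open Scope order_scope.

(* In a partition pair the order is recovered from the two bands: [a <= b] iff
   [a ⊙ b <= b ⊗ a] (PS2 one way, PS1 applied twice the other), and [a ⊙ b],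
   [b ⊗ a] see [b], [a] only through the class of [a ⊙ b].  Taking that class
   at its representative gives the gluing formula of (a), of which (S1) is an
   instance, while (S2) comes from [a <= a ⊙ q] and [b ⊗ q <= b].
   Conversely, for the glued order of (b), (S2) lets an inequality
   [phi_pu a <= psi_qu b] observed at any upper bound [u] of [p ∨ q] be pulled
   back to [p ∨ q], and (S1) compares psi- and phi-images of one element; so
   transitivity and (PS1) can be checked at a suitable common upper bound. *)

Set Implicit Arguments.
Unset Strict Implicit.
Unset Printing Implicit Defensive.

Section Poset.
Variables (T : Type) (le : T -> T -> Prop).
Hypothesis le_poset : is_poset le.

Lemma poset_refl a : le a a.
Proof. by case: le_poset. Qed.

Lemma poset_anti a b : le a b -> le b a -> a = b.
Proof. by case: le_poset => _ [anti _]; apply: anti. Qed.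

Lemma poset_trans a b c : le a b -> le b c -> le a c.
Proof. by case: le_poset => _ [_ tr]; apply: tr. Qed.

End Poset.

Section LeftNormalBand.
Variables (T : Type) (op : T -> T -> T).
Hypothesis op_band : left_normal_band op.

Local Notation "a ≼ b" := (band_le op a b) (at level 70).

Lemma band_idem a : op a a = a.
Proof. by case: op_band. Qed.

Lemma band_assoc a b c : op a (op b c) = op (op a b) c.
Proof. by case: op_band => _ [assoc _]; apply: assoc. Qed.

Lemma band_normal a b c : op a (op b c) = op a (op c b).
Proof. by case: op_band => _ [_ normal]; apply: normal. Qed.

Lemma band_le_refl a : a ≼ a.
Proof. exact: band_idem. Qed.

Lemma band_le_trans a b c : a ≼ b -> b ≼ c -> a ≼ c.
Proof. by rewrite /band_le => ab bc; rewrite -{1}bc -band_assoc ab bc. Qed.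

Lemma band_le_opl a b : a ≼ op a b.
Proof. by rewrite /band_le -band_assoc band_normal band_assoc band_idem. Qed.

Lemma band_le_opr a b : b ≼ op a b.
Proof. by rewrite /band_le -band_assoc band_idem. Qed.

Lemma band_op_le a b c : a ≼ c -> b ≼ c -> op a b ≼ c.
Proof. by rewrite /band_le => ac bc; rewrite band_assoc ac bc. Qed.

Lemma band_le_op2 a a' b b' : a ≼ a' -> b ≼ b' -> op a b ≼ op a' b'.
Proof.
move=> aa' bb'; apply: band_op_le.
- exact: band_le_trans aa' (band_le_opl _ _).
- exact: band_le_trans bb' (band_le_opr _ _).
Qed.

Lemma band_eq_op_r a q : a ≼ q -> band_eq op (op a q) q.
Proof. by split; [apply: band_op_le (band_le_refl _) | apply: band_le_opr]. Qed.

Lemma band_op_comp a q r : q ≼ r -> op (op a q) r = op a r.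
Proof. by rewrite /band_le => qr; rewrite -band_assoc band_normal qr. Qed.

Lemma band_op_eq x y s : y ≼ s -> s ≼ op x y -> op x s = op x y.
Proof.
by rewrite /band_le => ys sxy; rewrite -{1}ys band_normal band_assoc sxy.
Qed.

End LeftNormalBand.

Lemma homotactic_band_eq (T : Type) (o1 o2 : T -> T -> T) a b :
  homotactic o1 o2 -> band_eq o1 a b -> band_eq o2 a b.
Proof. by move=> hom [/hom ab /hom ba]. Qed.

Lemma rep_set_unique (T : Type) (op : T -> T -> T) (I : T -> Prop) p q :
  left_normal_band op -> is_rep_set op I -> I p -> I q -> band_eq op p q -> p = q.
Proof.
move=> op_band rep Ip Iq [pq qp].
have [i [_ [_ uniq_i]]] := rep p.
have pi : p = i by apply: (uniq_i p Ip); split; apply: band_le_refl.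
have qi : q = i := uniq_i q Iq (conj qp pq).
by rewrite pi qi.
Qed.

Section PartitionPair.
Variables (T : Type) (le : T -> T -> Prop) (otimes odot : T -> T -> T).
Variable I : T -> Prop.
Hypotheses (le_poset : is_poset le)
  (otimes_band : left_normal_band otimes) (odot_band : left_normal_band odot)
  (hom : homotactic otimes odot).
Hypothesis PS1 : forall a b c, le a b ->
  le (otimes a c) (otimes b c) /\ le (odot a c) (odot b c).
Hypothesis PS2 : forall a b, le (odot a b) (otimes b a) -> le a b.
Hypothesis I_rep : is_rep_set odot I.

Local Notation "a ⊗ b" := (otimes a b) (at level 40, left associativity).
Local Notation "a ⊙ b" := (odot a b) (at level 40, left associativity).
Local Notation "a ≼ b" := (band_le odot a b) (at level 70).
Local Notation "a ≡ b" := (band_eq odot a b) (at level 70).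

Lemma otimes_le a b : le (a ⊗ b) a.
Proof.
apply: PS2; rewrite (_ : (a ⊗ b) ⊙ a = a ⊗ b); last exact/hom/band_le_opl.
by rewrite (band_assoc otimes_band) (band_idem otimes_band); apply: poset_refl.
Qed.

Lemma le_odot a b : le a (a ⊙ b).
Proof.
apply: PS2; rewrite (_ : (a ⊙ b) ⊗ a = a ⊙ b); last exact/hom/band_le_opl.
by rewrite (band_assoc odot_band) (band_idem odot_band); apply: poset_refl.
Qed.

Lemma le_iff_odot_otimes a b : le a b <-> le (a ⊙ b) (b ⊗ a).
Proof.
split=> [ab|]; last exact: PS2.
have := (PS1 a ab).1; rewrite (band_idem otimes_band) => /(PS1 b) [_].
by rewrite (_ : (b ⊗ a) ⊙ b = b ⊗ a) //; apply/hom/band_le_opl.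
Qed.

(* Since [s] lies in the class of [a ⊙ b], [a ⊙ s = a ⊙ b] and [b ⊗ s = b ⊗ a]. *)
Lemma le_iff_odot_otimes_at p q s a b :
  s ≡ p ⊙ q -> a ≡ p -> b ≡ q -> le a b <-> le (a ⊙ s) (b ⊗ s).
Proof.
move=> [spq pqs] [ap pa] [bq qb].
have sab : s ≼ a ⊙ b := band_le_trans odot_band spq (band_le_op2 odot_band pa qb).
have a_s : a ≼ s :=
  band_le_trans odot_band ap (band_le_trans odot_band (band_le_opl odot_band p q) pqs).
have b_s : b ≼ s :=
  band_le_trans odot_band bq (band_le_trans odot_band (band_le_opr odot_band p q) pqs).
have sba : band_le otimes s (b ⊗ a).
  apply/hom; apply: (band_le_trans odot_band sab).
  by apply: (band_op_le odot_band); apply/hom; [apply: band_le_opr | apply: band_le_opl].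
rewrite (band_op_eq odot_band b_s sab) (band_op_eq otimes_band _ sba); last exact/hom.
exact: le_iff_odot_otimes.
Qed.

Lemma otimes_odot_class a q : a ≼ q -> a ⊗ q ≡ q /\ a ⊙ q ≡ q.
Proof.
move=> aq; split; last exact: band_eq_op_r.
by apply: homotactic_band_eq hom (band_eq_op_r otimes_band _); apply/hom.
Qed.

Lemma otimes_odot_id p a : p ≼ a -> a ⊗ p = a /\ a ⊙ p = a.
Proof. by move=> pa; split=> //; apply/hom. Qed.

Lemma otimes_odot_comp a q r : q ≼ r -> a ⊗ q ⊗ r = a ⊗ r /\ a ⊙ q ⊙ r = a ⊙ r.
Proof. by move=> qr; split; apply: band_op_comp => //; apply/hom. Qed.

Lemma otimes_odot_S1 a q r t :
  a ≼ q -> a ≼ r -> t ≡ q ⊙ r -> le (a ⊗ q ⊙ t) (a ⊙ r ⊗ t).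
Proof.
move=> aq ar tqr; have [aqq _] := otimes_odot_class aq; have [_ arr] := otimes_odot_class ar.
apply: (le_iff_odot_otimes_at tqr aqq arr).1.
exact: (poset_trans le_poset (otimes_le a q) (le_odot a r)).
Qed.

(* [a = b] would force [a ⊙ q = a], i.e. [q ≼ a ≡ p], so [p] and [q] would
   represent the same class. *)
Lemma otimes_odot_S2 p q a b : I p -> I q -> p ≼ q -> p <> q -> a ≡ p -> b ≡ p ->
  le (a ⊙ q) (b ⊗ q) -> le a b /\ a <> b.
Proof.
move=> Ip Iq pq p_neq_q [ap _] _ aqbq.
split; first exact: (poset_trans le_poset (le_odot a q)
                      (poset_trans le_poset aqbq (otimes_le b q))).
move=> ab; move: aqbq; rewrite -{}ab => aqaq.
have qa : q ≼ a.
  exact: (poset_anti le_poset (poset_trans le_poset aqaq (otimes_le a q)) (le_odot a q)).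
apply: p_neq_q; apply: (rep_set_unique odot_band I_rep Ip Iq).
by split=> //; apply: (band_le_trans odot_band qa ap).
Qed.

End PartitionPair.

Ltac solve_join_le :=
  match goal with
  | |- is_true (_ `|` _ <= _) => rewrite leUx; apply/andP; split; solve_join_le
  | |- is_true (?x <= ?x) => exact: lexx
  | |- is_true (_ <= _ `|` _) =>
      first [apply: lexUl; solve_join_le | apply: lexUr; solve_join_le]
  end.

Section GlueBand.
Context {d : Order.disp_t} {I : joinSemilatticeType d} {A : I -> Type}.
Variable f : forall p q : I, A p -> A q.
Arguments f : clear implicits.

Lemma glue_otimes_existT p q (a : A p) (b : A q) :
  p <= q -> glue_otimes f (existT A p a) (existT A q b) = existT A q (f p q a).
Proof. by move=> pq; rewrite /glue_otimes /= (join_r pq). Qed.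

Hypothesis f_id : forall p (a : A p), f p p a = a.
Hypothesis f_comp : forall p q r (a : A p),
  p <= q -> q <= r -> f q r (f p q a) = f p r a.

Lemma band_le_glue_otimes (x y : {p : I & A p}) :
  band_le (glue_otimes f) x y <-> projT1 x <= projT1 y.
Proof.
case: x y => [p a] [q b]; split=> [/(congr1 (@projT1 _ _)) /= <- | pq].
  exact: leUr.
by rewrite /band_le /glue_otimes /= (join_l pq) f_id.
Qed.

Lemma glue_otimes_band : left_normal_band (glue_otimes f).
Proof.
split=> [[p a] | ]; first by rewrite /glue_otimes /= joinxx f_id.
split=> [[p a] [q b] [r c] | [p a] [q b] [r c]]; rewrite /glue_otimes /=.
  by rewrite f_comp ?leUl // joinA.
by rewrite (joinC q r).
Qed.

End GlueBand.

Section Glue.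
Context {d : Order.disp_t} {I : joinSemilatticeType d} {A : I -> Type}.
Variables (leA : forall p, A p -> A p -> Prop) (psi phi : forall p q : I, A p -> A q).
Arguments leA : clear implicits.
Arguments psi : clear implicits.
Arguments phi : clear implicits.
Hypothesis leA_poset : forall p, is_poset (leA p).
Hypothesis maps_mono : forall (p q : I) (a b : A p), p <= q -> leA p a b ->
  leA q (psi p q a) (psi p q b) /\ leA q (phi p q a) (phi p q b).
Hypothesis maps_id : forall (p : I) (a : A p), psi p p a = a /\ phi p p a = a.
Hypothesis maps_comp : forall (p q r : I) (a : A p), p <= q -> q <= r ->
  psi q r (psi p q a) = psi p r a /\ phi q r (phi p q a) = phi p r a.
Hypothesis S1 : forall (p q r : I) (a : A p), p < q -> p < r ->
  leA (q `|` r) (phi q (q `|` r) (psi p q a)) (psi r (q `|` r) (phi p r a)).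
Hypothesis S2 : forall (p q : I) (a b : A p), p < q ->
  leA q (phi p q a) (psi p q b) -> leA p a b /\ a <> b.

Local Notation gle := (glue_le leA psi phi).

Lemma leA_refl p (a : A p) : leA p a a.
Proof. exact: (poset_refl (leA_poset p)). Qed.

Lemma leA_trans p (a b c : A p) : leA p a b -> leA p b c -> leA p a c.
Proof. exact: (poset_trans (leA_poset p)). Qed.

Lemma psi_mono p q (a b : A p) :
  p <= q -> leA p a b -> leA q (psi p q a) (psi p q b).
Proof. by move=> pq /(maps_mono pq) []. Qed.

Lemma phi_mono p q (a b : A p) :
  p <= q -> leA p a b -> leA q (phi p q a) (phi p q b).
Proof. by move=> pq /(maps_mono pq) []. Qed.

Lemma psi_id p (a : A p) : psi p p a = a. Proof. by case: (maps_id a). Qed.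
Lemma phi_id p (a : A p) : phi p p a = a. Proof. by case: (maps_id a). Qed.

Lemma psi_comp p q r (a : A p) :
  p <= q -> q <= r -> psi q r (psi p q a) = psi p r a.
Proof. by move=> pq qr; case: (maps_comp a pq qr). Qed.

Lemma phi_comp p q r (a : A p) :
  p <= q -> q <= r -> phi q r (phi p q a) = phi p r a.
Proof. by move=> pq qr; case: (maps_comp a pq qr). Qed.

Lemma psi_le_phi p q (a : A p) : p <= q -> leA q (psi p q a) (phi p q a).
Proof.
rewrite le_eqVlt => /predU1P [<- | pq]; first by rewrite psi_id phi_id; apply: leA_refl.
by have := S1 a pq pq; rewrite joinxx psi_id phi_id.
Qed.

Lemma S1_le p q r (a : A p) : p <= q -> p <= r ->
  leA (q `|` r) (phi q (q `|` r) (psi p q a)) (psi r (q `|` r) (phi p r a)).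
Proof.
rewrite le_eqVlt => /predU1P [<- pr | pq].
  by rewrite psi_id (join_r pr) psi_id; apply: leA_refl.
rewrite le_eqVlt => /predU1P [<- | pr]; last exact: S1.
by rewrite phi_id (join_l (ltW pq)) phi_id; apply: leA_refl.
Qed.

Lemma leA_of_phi_le_psi p q (a b : A p) :
  p <= q -> leA q (phi p q a) (psi p q b) -> leA p a b.
Proof.
rewrite le_eqVlt => /predU1P [<- | pq]; first by rewrite phi_id psi_id.
by case/(S2 pq).
Qed.

Lemma phi_le_psi_self p q (a : A p) :
  p <= q -> leA q (phi p q a) (psi p q a) -> p = q.
Proof. by rewrite le_eqVlt => /predU1P [// | pq] /(S2 pq) [_ /(_ erefl)]. Qed.

(* (S2) pulls an inequality seen at any upper bound [u] back down to [p `|` q]. *)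
Lemma glue_le_above p q u (a : A p) (b : A q) : p `|` q <= u ->
  leA u (phi p u a) (psi q u b) -> gle (existT A p a) (existT A q b).
Proof.
move=> pqu; rewrite -(phi_comp a (leUl p q) pqu) -(psi_comp b (leUr q p) pqu).
exact: (leA_of_phi_le_psi pqu).
Qed.

Lemma glue_le_refl x : gle x x.
Proof. by case: x => p a; rewrite /glue_le /= joinxx phi_id psi_id; apply: leA_refl. Qed.

Lemma glue_le_anti x y : gle x y -> gle y x -> x = y.
Proof.
case: x y => [p a] [q b]; rewrite /glue_le /= (joinC q p) => ab ba.
have pE := phi_le_psi_self (leUl p q)
  (leA_trans ab (leA_trans (psi_le_phi b (leUr q p)) ba)).
have qE := phi_le_psi_self (leUr q p)
  (leA_trans ba (leA_trans (psi_le_phi a (leUl p q)) ab)).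
have qp : q = p by rewrite qE -pE.
subst q; move: ab ba; rewrite joinxx !phi_id !psi_id => ab ba.
by rewrite (poset_anti (leA_poset p) ab ba).
Qed.

(* In the glued order: [x <= y] implies [x <= y ⊙ z], read off at [(p ∨ q) ∨ (q ∨ r)]. *)
Lemma glue_le_odotr_at p q r (a : A p) (b : A q) : gle (existT A p a) (existT A q b) ->
  leA (p `|` q `|` (q `|` r))
      (phi p _ a) (psi (q `|` r) _ (phi q (q `|` r) b)).
Proof.
move=> ab; apply: (leA_trans _ (S1_le b (leUr q p) (leUl q r))).
by rewrite -(phi_comp a (leUl p q) (leUl _ (q `|` r))); apply: phi_mono (leUl _ _) ab.
Qed.

Lemma glue_le_trans x y z : gle x y -> gle y z -> gle x z.
Proof.
case: x y z => [p a] [q b] [r c] ab bc.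
apply: (glue_le_above (u := p `|` q `|` (q `|` r))); first by solve_join_le.
apply: (leA_trans (glue_le_odotr_at r ab)).
by rewrite -(psi_comp c (leUr r q) (leUr _ _)); apply: psi_mono (leUr _ _) bc.
Qed.

Lemma glue_poset : is_poset gle.
Proof. split; [exact: glue_le_refl | split; [exact: glue_le_anti | exact: glue_le_trans]]. Qed.

Lemma glue_le_otimes x y z : gle x y -> gle (glue_otimes psi x z) (glue_otimes psi y z).
Proof.
case: x y z => [p a] [q b] [r c] ab; rewrite /glue_otimes /=.
apply: (glue_le_above (u := p `|` r `|` (p `|` q))); first by solve_join_le.
rewrite (psi_comp b (leUl q r)); last by solve_join_le.
apply: (leA_trans (S1_le a (leUl p r) (leUl p q))).
by rewrite -(psi_comp b (leUr q p) (leUr _ _)); apply: psi_mono (leUr _ _) ab.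
Qed.

Lemma glue_le_odot x y z : gle x y -> gle (glue_odot phi x z) (glue_odot phi y z).
Proof.
case: x y z => [p a] [q b] [r c] ab; rewrite /glue_odot /=.
apply: (glue_le_above (u := p `|` q `|` (q `|` r))); first by solve_join_le.
rewrite (phi_comp a (leUl p r)); last by solve_join_le.
exact: glue_le_odotr_at.
Qed.

Lemma glue_le_odot_otimes x y : gle (glue_odot phi x y) (glue_otimes psi y x) -> gle x y.
Proof.
case: x y => [p a] [q b]; rewrite /glue_le /glue_odot /glue_otimes /= => h.
apply: (glue_le_above (u := p `|` q `|` (q `|` p))); first by solve_join_le.
by rewrite -(phi_comp a (leUl p q) (leUl _ _)) -(psi_comp b (leUl q p) (leUr _ _)).
Qed.

Lemma band_le_glue_odot x y : band_le (glue_odot phi) x y <-> projT1 x <= projT1 y.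
Proof. exact: (band_le_glue_otimes phi_id). Qed.

Lemma glue_partition_pair : partition_pair gle (glue_otimes psi) (glue_odot phi).
Proof.
split; first exact: (glue_otimes_band psi_id psi_comp).
split; first exact: (glue_otimes_band phi_id phi_comp).
split.
  move=> x y; apply: (iff_trans (band_le_glue_otimes psi_id x y)).
  exact: (iff_sym (band_le_glue_odot x y)).
split; last exact: glue_le_odot_otimes.
by move=> x y z xy; split; [apply: glue_le_otimes | apply: glue_le_odot].
Qed.

End Glue.

Theorem theorem5p2 :
  (* (a) *)
  (forall (T : Type) (le : T -> T -> Prop) (otimes odot : T -> T -> T)
          (I : T -> Prop),
     is_poset le ->
     partition_pair le otimes odot ->
     is_rep_set odot I ->
     (* psi_pq(a) := a ⊗ q and phi_pq(a) := a ⊙ q are well-defined maps A_p -> A_q *)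
     (forall p q a, I p -> I q -> band_le odot p q -> band_eq odot a p ->
        band_eq odot (otimes a q) q /\ band_eq odot (odot a q) q) /\
     (* monotone w.r.t. the restricted orders *)
     (forall p q a b, I p -> I q -> band_le odot p q ->
        band_eq odot a p -> band_eq odot b p -> le a b ->
        le (otimes a q) (otimes b q) /\ le (odot a q) (odot b q)) /\
     (* identities at p = q *)
     (forall p a, I p -> band_eq odot a p -> otimes a p = a /\ odot a p = a) /\
     (* closed under composition *)
     (forall p q r a, I p -> I q -> I r -> band_le odot p q -> band_le odot q r ->
        band_eq odot a p ->
        otimes (otimes a q) r = otimes a r /\ odot (odot a q) r = odot a r) /\
     (* (S1) ; t = q \/ r is the representative of the class of q ⊙ r *)
     (forall p q r t a, I p -> I q -> I r -> I t ->
        band_le odot p q -> p <> q -> band_le odot p r -> p <> r ->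
        band_eq odot t (odot q r) -> band_eq odot a p ->
        le (odot (otimes a q) t) (otimes (odot a r) t)) /\
     (* (S2) *)
     (forall p q a b, I p -> I q -> band_le odot p q -> p <> q ->
        band_eq odot a p -> band_eq odot b p ->
        le (odot a q) (otimes b q) -> le a b /\ a <> b) /\
     (* order characterization; s = p \/ q *)
     (forall p q s a b, I p -> I q -> I s -> band_eq odot s (odot p q) ->
        band_eq odot a p -> band_eq odot b q ->
        (le a b <-> le (odot a s) (otimes b s)))) /\
  (* (b) *)
  (forall (d : Order.disp_t) (I : joinSemilatticeType d) (A : I -> Type)
          (leA : forall p, A p -> A p -> Prop)
          (psi phi : forall p q : I, A p -> A q),
     (forall p, is_poset (leA p)) ->
     (forall (p q : I) (a b : A p), p <= q -> leA p a b ->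
        leA q (psi p q a) (psi p q b) /\ leA q (phi p q a) (phi p q b)) ->
     (forall (p : I) (a : A p), psi p p a = a /\ phi p p a = a) ->
     (forall (p q r : I) (a : A p), p <= q -> q <= r ->
        psi q r (psi p q a) = psi p r a /\ phi q r (phi p q a) = phi p r a) ->
     (* (S1) *)
     (forall (p q r : I) (a : A p), p < q -> p < r ->
        leA (q `|` r) (phi q (q `|` r) (psi p q a)) (psi r (q `|` r) (phi p r a))) ->
     (* (S2) *)
     (forall (p q : I) (a b : A p), p < q ->
        leA q (phi p q a) (psi p q b) -> leA p a b /\ a <> b) ->
     is_poset (glue_le leA psi phi) /\
     partition_pair (glue_le leA psi phi) (glue_otimes psi) (glue_odot phi) /\
     (* the classes of ≡ are the A_p, ordered as in I *)
     (forall x y : {p : I & A p},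
        band_le (glue_odot phi) x y <-> projT1 x <= projT1 y) /\
     (* the induced maps are the given psi_pq, phi_pq *)
     (forall (p q : I) (a : A p) (b : A q), p <= q ->
        glue_otimes psi (existT A p a) (existT A q b) = existT A q (psi p q a) /\
        glue_odot phi (existT A p a) (existT A q b) = existT A q (phi p q a))).
Proof.
split=> [T le otimes odot I le_poset [otimes_band [odot_band [hom [PS1 PS2]]]] I_rep
        | d I A leA psi phi leA_poset maps_mono maps_id maps_comp S1 S2].
- split=> [p q a _ _ pq [ap _] | ].
    exact: (otimes_odot_class otimes_band odot_band hom (band_le_trans odot_band ap pq)).
  split=> [p q a b _ _ _ _ _ /PS1 // | ].
  split=> [p a _ [_ pa] | ]; first exact: (otimes_odot_id hom pa).
  split=> [p q r a _ _ _ _ qr _ | ]; first exact: (otimes_odot_comp otimes_band odot_band hom a qr).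
  split=> [p q r t a _ _ _ _ pq _ pr _ tqr [ap _] | ].
    apply: (otimes_odot_S1 le_poset otimes_band odot_band hom PS1 PS2 _ _ tqr).
      exact: (band_le_trans odot_band ap pq).
    exact: (band_le_trans odot_band ap pr).
  split; first exact: (otimes_odot_S2 le_poset otimes_band odot_band hom PS2 I_rep).
  move=> p q s a b _ _ _.
  exact: (le_iff_odot_otimes_at otimes_band odot_band hom PS1 PS2).
- split; first exact: (glue_poset leA_poset maps_mono maps_id maps_comp S1 S2).
  split; first exact: (glue_partition_pair leA_poset maps_mono maps_id maps_comp S1 S2).
  split; first exact: (band_le_glue_odot maps_id).
  by move=> p q a b pq; split; apply: glue_otimes_existT.
Qed.
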